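(* Let $n\geq 4$ and let $T=S_{x,y}$ be a double star on $n$ vertices, where $x+y=n-2$. If $T$ is maximal with respect to $e^{M_2}$ among all double stars on $n$ vertices, then $|x-y|\leq 1$, i.e., $T$ is the balanced double star $S_{\lfloor\frac{n-2}{2}\rfloor,\lceil\frac{n-2}{2}\rceil}$. Moreover, $$e^{M_2}(S_{\lfloor\frac{n-2}{2}\rfloor,\lceil\frac{n-2}{2}\rceil})=\begin{cases} e^{\frac{n^2}{4}}+(n-2)e^{\frac{n}{2}}, & n \text{ even},\\ e^{\frac{n^2-1}{4}}+\frac{n-3}{2}e^{\frac{n-1}{2}}+\frac{n-1}{2}e^{\frac{n+1}{2}}, & n\text{ odd}.\end{cases}$$
   Context: For a tree $G$ with edge set $E(G)$ and vertex degrees $d_G(v)$, the exponential of the second Zagreb index is $e^{M_2}(G)=\sum_{uv\in E(G)} e^{d_G(u)d_G(v)}$. For integers $x,y\geq 1$, the double star $S_{x,y}$ is the tree on $x+y+2$ vertices with exactly two non-pendent vertices, of degrees $x+1$ and $y+1$ (these two vertices are adjacent, the first has $x$ pendant neighbours and the second has $y$ pendant neighbours). *)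

From HB Require Import structures.
From mathcomp Require Import all_boot all_order all_algebra.
From mathcomp Require Import all_classical all_reals all_analysis.
Set Implicit Arguments. Unset Strict Implicit. Unset Printing Implicit Defensive.
Import Order.TTheory GRing.Theory Num.Theory.
Local Open Scope ring_scope.

(* A finite simple graph on vertex set 'I_N given by a (symmetric, irreflexive)
   adjacency relation. *)
Definition deg (N : nat) (adj : rel 'I_N) (u : 'I_N) : nat :=
  #|[set v | adj u v]|.

Definition eM2 (R : realType) (N : nat) (adj : rel 'I_N) : R :=
  \sum_(u : 'I_N) \sum_(v : 'I_N | (u < v)%N && adj u v)
     expR ((deg adj u * deg adj v)%N%:R).

(* Double star S_{x,y} on x+y+2 vertices: vertex 0 and vertex 1 are the two
   adjacent centres; vertices 2..x+1 are the x pendant neighbours of 0, and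
   vertices x+2..x+y+1 are the y pendant neighbours of 1. *)
Definition dstar_edge (x : nat) (u v : nat) : bool :=
  [|| (u == 0%N) && (v == 1%N),
      (u == 0%N) && (2 <= v <= x.+1)%N
    | (u == 1%N) && (x.+2 <= v)%N ].

Definition dstar_adj (x y : nat) : rel 'I_(x + y + 2) :=
  fun u v => dstar_edge x u v || dstar_edge x v u.

Arguments dstar_adj x y : clear implicits.
Arguments eM2 R {N} adj.

From HB Require Import structures.
From mathcomp Require Import all_boot all_order all_algebra.
From mathcomp Require Import all_classical all_reals all_analysis.
From mathcomp Require Import zify ring lra.
Import Order.TTheory GRing.Theory Num.Theory.
Local Open Scope ring_scope.

(* The double star S_{x,y} has one central edge, of weight e^{(x+1)(y+1)}, and
   x resp. y pendant edges, of weights e^{x+1} resp. e^{y+1}.  If x >= y + 2,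
   moving a pendant vertex from the first centre to the second raises the
   product of the central degrees by x - y - 1 >= 1, so the central term gains
   at least (e - 1) e^{(x+1)(y+1)} > e^{(x+1)(y+1)} >= e^{2(x+1)}, while the
   pendant edges lose at most x e^{x+1} < e^{2(x+1)}. *)

Lemma card_set_ord_count N (P : pred nat) :
  #|[set v : 'I_N | P v]| = count P (iota 0 N).
Proof.
by rewrite cardsE cardE /enum_mem size_filter -enumT -val_enum_ord count_map.
Qed.

Lemma count_iota_const (P : pred nat) (b : bool) m k :
  (forall i, (m <= i < m + k)%N -> P i = b) -> count P (iota m k) = (b * k)%N.
Proof.
move=> Pb; rewrite (@eq_in_count _ _ (fun=> b)); last first.
  by move=> i; rewrite mem_iota => /Pb.
by case: b {Pb}; rewrite ?count_pred0 ?count_predT ?size_iota ?mul0n ?mul1n.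
Qed.

Lemma sumr_nat_const_in (V : nmodType) m n (F : nat -> V) c :
  (forall i, (m <= i < n)%N -> F i = c) -> \sum_(m <= i < n) F i = c *+ (n - m).
Proof. by move=> Fc; rewrite -sumr_const_nat; apply: eq_big_nat. Qed.

Lemma eM2_nat_rel (R : realType) N (E : rel nat) (d : nat -> nat) :
  (forall u : 'I_N, deg (fun u v : 'I_N => E u v) u = d u) ->
  eM2 R (fun u v : 'I_N => E u v) =
    \sum_(0 <= u < N) \sum_(0 <= v < N | (u < v)%N && E u v) expR (d u * d v)%:R.
Proof.
move=> degE; rewrite /eM2 big_mkord; apply: eq_bigr => u _.
by rewrite big_mkord; apply: eq_bigr => v _; rewrite !degE.
Qed.

Section DoubleStar.

Variable R : realType.
Variables x y : nat.

Definition dstar_rel : rel nat := fun u v => dstar_edge x u v || dstar_edge x v u.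

Definition dstar_deg (u : nat) : nat :=
  if u == 0%N then x.+1 else if u == 1%N then y.+1 else 1%N.

Lemma iota_dstar : iota 0 (x + y + 2) = [:: 0; 1] ++ iota 2 x ++ iota x.+2 y.
Proof. by rewrite (addnC _ 2) -addnA !iotaD. Qed.

Lemma deg_dstar (u : 'I_(x + y + 2)) : deg (dstar_adj x y) u = dstar_deg u.
Proof.
rewrite /deg (card_set_ord_count _ (dstar_rel u)) iota_dstar !count_cat.
rewrite (@count_iota_const _ (u == 0 :> nat)); last first.
  by move=> i hi; rewrite /dstar_rel /dstar_edge; lia.
rewrite (@count_iota_const _ (u == 1 :> nat)); last first.
  by move=> i hi; rewrite /dstar_rel /dstar_edge; lia.
by rewrite /= /dstar_rel /dstar_edge /dstar_deg; case: (nat_of_ord u) => [|[|k]] /=; lia.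
Qed.

Lemma sum_dstar_split (V : nmodType) (F : nat -> V) :
  \sum_(0 <= v < x + y + 2) F v =
    F 0%N + F 1%N + \sum_(2 <= v < x.+2) F v + \sum_(x.+2 <= v < x + y + 2) F v.
Proof.
rewrite (@big_cat_nat _ _ _ x.+2) //; last by lia.
by rewrite (@big_cat_nat _ _ _ 2 0 x.+2) // big_ltn // big_nat1.
Qed.

Definition eM2_dstar : R :=
  expR (x.+1 * y.+1)%:R + x%:R * expR x.+1%:R + y%:R * expR y.+1%:R.

Lemma eM2_dstarE : eM2 R (dstar_adj x y) = eM2_dstar.
Proof.
rewrite (@eM2_nat_rel R _ dstar_rel dstar_deg deg_dstar) sum_dstar_split.
have row_tail m n : (2 <= m)%N -> \sum_(m <= u < n)
    \sum_(0 <= v < x + y + 2 | (u < v)%N && dstar_rel u v)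
      expR (R := R) (dstar_deg u * dstar_deg v)%:R = 0.
  move=> m2; rewrite big_nat big1 // => u /andP[mu _].
  by rewrite big1 // => v; rewrite /dstar_rel /dstar_edge; lia.
rewrite !row_tail // !addr0.
rewrite (big_mkcond (fun v => (0 < v)%N && _)) (big_mkcond (fun v => (1 < v)%N && _)).
rewrite !sum_dstar_split /=.
have deg_pendant i : (2 <= i)%N -> dstar_deg i = 1%N by case: i => [|[|i]].
rewrite (@sumr_nat_const_in _ 2 x.+2 _ (expR x.+1%:R)); last first.
  move=> i hi; have i2 : (2 <= i)%N by lia.
  by rewrite ifT ?(deg_pendant i i2) ?muln1 //; rewrite /dstar_rel /dstar_edge; lia.
rewrite (@sumr_nat_const_in _ x.+2 _ _ 0); last first.
  by move=> i hi; rewrite ifF //; rewrite /dstar_rel /dstar_edge; lia.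
rewrite (@sumr_nat_const_in _ 2 x.+2 _ 0); last first.
  by move=> i hi; rewrite ifF //; rewrite /dstar_rel /dstar_edge; lia.
rewrite (@sumr_nat_const_in _ x.+2 _ _ (expR y.+1%:R)); last first.
  move=> i hi; have i2 : (2 <= i)%N by lia.
  by rewrite ifT ?(deg_pendant i i2) ?muln1 //; rewrite /dstar_rel /dstar_edge; lia.
have -> : (x.+2 - 2 = x)%N by lia.
have -> : (x + y + 2 - x.+2 = y)%N by lia.
by rewrite !mul0rn !add0r !addr0 /eM2_dstar !mulr_natl.
Qed.

End DoubleStar.

Lemma eM2_dstarC (R : realType) x y : eM2_dstar R x y = eM2_dstar R y x.
Proof. by rewrite /eM2_dstar mulnC -!addrA [X in _ + X]addrC. Qed.

Lemma lt_expR {R : realType} (t : R) : t < expR t.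
Proof. by have := expR_ge1Dx t; lra. Qed.

Lemma eM2_dstar_shift (R : realType) a b : (1 <= b)%N -> (b.+1 < a)%N ->
  eM2_dstar R a b < eM2_dstar R a.-1 b.+1.
Proof.
case: a => [//|c] /= b_gt0 lt_bc; rewrite /eM2_dstar.
set P := (c.+2 * b.+1)%N%:R : R; set Q := (c.+1 * b.+2)%N%:R : R.
have center_gain : 2 * expR P <= expR Q.
  have e_ge2 : 2 <= expR (1 : R) by have := expR_ge1Dx (1 : R); lra.
  have e_gain : expR 1 * expR P <= expR Q.
    by rewrite -expRD ler_expR addrC /P /Q natr1 ler_nat; lia.
  by apply: le_trans e_gain; rewrite ler_wpM2r ?expR_ge0.
have pendant_loss : c.+1%:R * expR c.+2%:R < expR P.
  have c_lt_e : c.+1%:R < expR (c.+2%:R : R).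
    by apply: (lt_trans _ (lt_expR _)); rewrite ltr_nat.
  have e_sq : expR c.+2%:R * expR c.+2%:R <= expR P.
    by rewrite -expRD ler_expR -natrD ler_nat; nia.
  by apply: lt_le_trans e_sq; rewrite ltr_pM2r ?expR_gt0.
have small_side : b%:R * expR b.+1%:R <= b.+1%:R * expR (b.+2%:R : R).
  by apply: ler_pM; rewrite ?ler_nat ?ler_expR ?ler_nat ?expR_ge0.
have c_pendants : 0 <= c%:R * expR (c.+1%:R : R) by rewrite mulr_ge0 ?expR_ge0.
lra.
Qed.

Lemma eM2_dstar_halves (R : realType) n : (2 <= n)%N ->
  eM2_dstar R (n - 2)./2 (uphalf (n - 2)) =
    (if odd n then
       expR ((n%:R ^+ 2 - 1) / 4) + ((n%:R - 3) / 2) * expR ((n%:R - 1) / 2)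
         + ((n%:R - 1) / 2) * expR ((n%:R + 1) / 2)
     else expR (n%:R ^+ 2 / 4) + (n%:R - 2) * expR (n%:R / 2)).
Proof.
move=> /subnK <-; rewrite addnK; move: (n - 2)%N => m.
rewrite -[m]odd_double_half; case: (odd m); move: (m./2) => k;
  rewrite uphalf_half !half_bit_double !oddD odd_double /=.
- by rewrite /eM2_dstar -mul2n; congr (expR _ + _ * expR _ + _ * expR _); field.
- by rewrite /eM2_dstar -mul2n -addrA -mulrDl; congr (expR _ + _ * expR _); field.
Qed.

Theorem lemma3 (R : realType) (n x y : nat) (hn : (4 <= n)%N)
  (hx : (1 <= x)%N) (hy : (1 <= y)%N) (hxy : (x + y)%N = (n - 2)%N)
  (hmax : forall x' y' : nat, (1 <= x')%N -> (1 <= y')%N ->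
            (x' + y')%N = (n - 2)%N ->
            eM2 R (dstar_adj x' y') <= eM2 R (dstar_adj x y)) :
  ((x <= y.+1)%N /\ (y <= x.+1)%N) /\
  eM2 R (dstar_adj ((n - 2)./2) (uphalf (n - 2))) =
    (if odd n then
       expR ((n%:R ^+ 2 - 1) / 4) + ((n%:R - 3) / 2) * expR ((n%:R - 1) / 2)
         + ((n%:R - 1) / 2) * expR ((n%:R + 1) / 2)
     else expR (n%:R ^+ 2 / 4) + (n%:R - 2) * expR (n%:R / 2)).
Proof.
split; last by rewrite eM2_dstarE eM2_dstar_halves //; lia.
have no_gain a b : (1 <= a)%N -> (1 <= b)%N -> (a + b = n - 2)%N ->
    ~ eM2_dstar R x y < eM2_dstar R a b.
  by move=> ha hb hab; rewrite -!eM2_dstarE ltNge hmax.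
split; rewrite leqNgt; apply/negP => unbalanced.
- by apply: (no_gain x.-1 y.+1); [lia | lia | lia | exact: eM2_dstar_shift].
- apply: (no_gain x.+1 y.-1); [lia | lia | lia |].
  by rewrite eM2_dstarC [X in _ < X]eM2_dstarC; exact: eM2_dstar_shift.
Qed.
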